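(* Let $(b_n)_{n\ge0}$ be a sequence of real numbers such that (1) $0\le b_n\le 1$ for all $n$; (2) $\limsup_{n\to\infty} b_n<1$; (3) $\sum_{k=0}^n b_kb_{n-k}\to\infty$ as $n\to\infty$. Then there is no set $A\subseteq\mathbb{N}$ such that $$R_A(n)=\sum_{k=0}^n b_kb_{n-k}+o\left(\Big(\sum_{k=0}^n b_kb_{n-k}\Big)^{1/2}\right)\quad (n\to\infty).$$
   Context: $\mathbb{N}$ denotes the set of non-negative integers. For $A\subseteq\mathbb{N}$, $R_A(n)$ denotes the number of ordered pairs $(a,a')$ with $a,a'\in A$ and $a+a'=n$. *)

From Stdlib Require Import Reals Lra Lia Bool.
Open Scope R_scope.

(* Subsets of N are represented by boolean predicates A : nat -> bool
   (classically every subset has such a characteristic function). *)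

(* R_A(n) = number of ordered pairs (a,a') in A x A with a + a' = n,
   i.e. number of k in {0..n} with k in A and n-k in A. *)
Fixpoint rep_count (A : nat -> bool) (n m : nat) : nat :=
  match m with
  | O => if andb (A O) (A n) then 1%nat else 0%nat
  | S m' => ((if andb (A m) (A (n - m)%nat) then 1%nat else 0%nat) + rep_count A n m')%nat
  end.

Definition R_A (A : nat -> bool) (n : nat) : nat := rep_count A n n.

Definition conv (b : nat -> R) (n : nat) : R :=
  sum_f_R0 (fun k => b k * b (n - k)%nat) n.

Definition limsup_lt_1 (b : nat -> R) : Prop :=
  exists c : R, c < 1 /\ exists N : nat, forall n : nat, (N <= n)%nat -> b n <= c.

Definition tends_to_infty (f : nat -> R) : Prop :=
  forall M : R, exists N : nat, forall n : nat, (N <= n)%nat -> M <= f n.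

Definition little_o_approx (f g h : nat -> R) : Prop :=
  forall eps : R, 0 < eps -> exists N : nat, forall n : nat, (N <= n)%nat ->
    Rabs (f n - g n) <= eps * Rabs (h n).

From Stdlib Require Import Reals.
Open Scope R_scope.
From mathcomp Require Import all_boot all_order all_algebra.
From mathcomp Require Import Rstruct.
From mathcomp Require Import ring lra zify.
Import Order.TTheory GRing.Theory Num.Theory.
Local Open Scope ring_scope.

(* Put f(x) = sum_(a in A) x^a and g(x) = sum_k b_k x^k, so that f(x)^2 = sum_n R_A(n) x^n
   and g(x)^2 = sum_n (b*b)_n x^n, and let e_n = R_A(n) - (b*b)_n.  As x -> 1-, g(x) -> oo,
   sum_n e_n^2 x^n = o(g(x)^2) by hypothesis, and sum_n x^n = 1/(1-x) = o(g(x)^2) because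
   (b*b)_n -> oo.  The inequality (sum_k u_k v_k)^2 <= sum_n ((u*v)_n)^2, applied to
   u_k = (1_A(k) - b_k) x^(k/2) and v_k = (1_A(k) + b_k) x^(k/2), gives
   f(x) = sum_k b_k^2 x^k + o(g(x)) <= (c + o(1)) g(x), where b_k <= c < 1 for large k.
   But f(x)^2 = sum_n R_A(n) x^n >= g(x)^2 - (sum_n e_n^2 x^n + sum_n x^n) / 2
   = (1 - o(1)) g(x)^2, a contradiction.  All series are truncated at a degree M so large
   that the truncation errors, of order M^3 x^M, are negligible. *)

Definition indicator (A : nat -> bool) (k : nat) : R := (A k)%:R.

Definition cauchy (u v : nat -> R) (n : nat) : R :=
  \sum_(k < n.+1) u k * v (n - k)%N.

Definition gen_sum (w : nat -> R) (x : R) (M : nat) : R :=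
  \sum_(k < M) w k * x ^+ k.

Definition cauchy_trunc (u v : nat -> R) (M n : nat) : R :=
  \sum_(p : 'I_M * 'I_M | (p.1 + p.2 == n)%N) u p.1 * v p.2.

Lemma indicator01 A k : 0 <= indicator A k <= 1.
Proof. by rewrite /indicator; case: (A k); rewrite ?lexx ?ler01. Qed.

Lemma indicator_sqr A k : indicator A k ^+ 2 = indicator A k.
Proof. by rewrite /indicator; case: (A k); rewrite ?expr1n ?expr0n. Qed.

Lemma sum_f_R0_big (f : nat -> R) n : sum_f_R0 f n = \sum_(k < n.+1) f k.
Proof.
elim: n => [|n IH]; first by rewrite big_ord_recr big_ord0 /= add0r.
by rewrite big_ord_recr /= -IH.
Qed.

Lemma conv_cauchy b n : conv b n = cauchy b b n.
Proof. by rewrite /conv sum_f_R0_big. Qed.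

Lemma rep_count_big A n m :
  INR (rep_count A n m) = \sum_(k < m.+1) indicator A k * indicator A (n - k)%N.
Proof.
rewrite INRE /indicator; elim: m => [|m IH].
  by rewrite big_ord1 subn0 /=; case: (A 0%N); case: (A n); rewrite /= ?mulr1 ?mulr0.
rewrite big_ord_recr -IH /= natrD addrC; congr (_ + _).
by case: (A m.+1); case: (A (n - m.+1)%N); rewrite /= ?mulr1 ?mulr0.
Qed.

Lemma R_A_cauchy A n : INR (R_A A n) = cauchy (indicator A) (indicator A) n.
Proof. exact: rep_count_big. Qed.

Lemma cauchy_ge0 u v n :
  (forall k, 0 <= u k) -> (forall k, 0 <= v k) -> 0 <= cauchy u v n.
Proof. by move=> u0 v0; apply: sumr_ge0 => k _; apply: mulr_ge0. Qed.

Lemma cauchyC u v n : cauchy u v n = cauchy v u n.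
Proof.
rewrite /cauchy (reindex_inj rev_ord_inj) /=; apply: eq_bigr => k _.
by rewrite subSS subKn 1?mulrC // -ltnS.
Qed.

Lemma cauchy_diff_sqr a b n :
  cauchy a a n - cauchy b b n = cauchy (fun k => a k - b k) (fun k => a k + b k) n.
Proof.
have -> : cauchy (fun k => a k - b k) (fun k => a k + b k) n
    = cauchy a a n - cauchy b b n + (cauchy a b n - cauchy b a n).
  by rewrite /cauchy -!sumrB -big_split /=; apply: eq_bigr => k _; ring.
by rewrite (cauchyC a b) subrr addr0.
Qed.

Lemma weighted_term (u v : nat -> R) (r : R) n k : (k <= n)%N ->
  u k * r ^+ k * (v (n - k)%N * r ^+ (n - k)) = u k * v (n - k)%N * r ^+ n.
Proof. by move=> kn; rewrite -[in r ^+ n](subnKC kn) exprD; ring. Qed.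

Lemma cauchy_weight u v r n :
  cauchy (fun k => u k * r ^+ k) (fun k => v k * r ^+ k) n = r ^+ n * cauchy u v n.
Proof.
rewrite /cauchy mulr_sumr; apply: eq_bigr => k _.
by rewrite weighted_term 1?mulrC // -ltnS.
Qed.

Lemma cauchy_truncE u v M n :
  cauchy_trunc u v M n = \sum_(k < M | ((k <= n) && (n - k < M))%N) u k * v (n - k)%N.
Proof.
rewrite /cauchy_trunc -(pair_big_dep xpredT (fun i j : 'I_M => i + j == n)%N
  (fun i j : 'I_M => u i * v j)) [RHS]big_mkcond /=.
apply: eq_bigr => k _.
rewrite (eq_bigl (fun j : 'I_M => ((k <= n) && (j == n - k :> nat))%N)); last first.
  by move=> j; apply/eqP/andP => [<-|[kn /eqP ->]]; [rewrite leq_addr addKn | rewrite subnKC].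
by rewrite (big_ord1_cond_eq _ (fun j => u k * v j) (fun=> (k <= n)%N)) andbC.
Qed.

Lemma cauchy_trunc_small u v M n : (n < M)%N -> cauchy_trunc u v M n = cauchy u v n.
Proof.
move=> nM; rewrite cauchy_truncE /cauchy (big_ord_widen M (fun k => u k * v (n - k)%N) nM).
by apply: eq_bigl => k; rewrite ltnS; apply: andb_idr => _; lia.
Qed.

Lemma cauchy_trunc_ge0 u v M n :
  (forall k, (k <= n)%N -> 0 <= u k * v (n - k)%N) -> 0 <= cauchy_trunc u v M n.
Proof. by move=> uv0; rewrite cauchy_truncE; apply: sumr_ge0 => k /andP[/uv0]. Qed.

Lemma norm_cauchy_trunc_le u v M n beta :
  (forall k, (k <= n)%N -> `|u k * v (n - k)%N| <= beta) ->
  `|cauchy_trunc u v M n| <= M%:R * beta.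
Proof.
move=> uv_le; have beta0 := le_trans (normr_ge0 _) (uv_le 0%N (leq0n n)).
rewrite cauchy_truncE; apply: le_trans (ler_norm_sum _ _ _) _.
apply: le_trans (_ : \sum_(k < M) beta <= _); last by rewrite sumr_const card_ord mulr_natl.
rewrite [X in _ <= X](bigID (fun k : 'I_M => (k <= n) && (n - k < M))%N) /=.
rewrite -[X in X <= _]addr0; apply: lerD; last exact: sumr_ge0.
by apply: ler_sum => k /andP[/uv_le].
Qed.

Lemma norm_cauchy_trunc_weight_le u v r beta M n : 0 <= r <= 1 -> (M <= n)%N ->
  (forall i j, `|u i * v j| <= beta) ->
  `|cauchy_trunc (fun k => u k * r ^+ k) (fun k => v k * r ^+ k) M n|
    <= M%:R * (beta * r ^+ M).
Proof.
move=> /andP[r0 r1] Mn uv_le; apply: norm_cauchy_trunc_le => k kn.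
rewrite weighted_term // normrM (ger0_norm (exprn_ge0 _ r0)).
by apply: ler_pM; rewrite ?exprn_ge0 ?uv_le ?ler_wiXn2l.
Qed.

Lemma ord_pair_sum_lt M (p : 'I_M * 'I_M) : (p.1 + p.2 < M + M)%N.
Proof. by case: p => [[i hi] [j hj]] /=; lia. Qed.

Lemma sum_pair_fibers M (H : 'I_M * 'I_M -> R) :
  \sum_(n < M + M) \sum_(p : 'I_M * 'I_M | (p.1 + p.2 == n)%N) H p = \sum_p H p.
Proof.
rewrite (exchange_big_dep xpredT) //=; apply: eq_bigr => p _.
under eq_bigl do rewrite eq_sym.
by rewrite (big_ord1_eq _ (fun=> H p)) ord_pair_sum_lt.
Qed.

Lemma mul_sums_cauchy_trunc (u v : nat -> R) M :
  (\sum_(k < M) u k) * (\sum_(l < M) v l) = \sum_(n < M + M) cauchy_trunc u v M n.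
Proof. by rewrite sum_pair_fibers big_distrlr pair_big. Qed.

Definition energy (u v : nat -> R) (M : nat) : R :=
  \sum_(p : 'I_M * 'I_M) \sum_(q : 'I_M * 'I_M)
    (if (p.1 + p.2 == q.1 + q.2)%N then u p.1 * v p.2 * (u q.1 * v q.2) else 0).

Lemma sum_sqr_cauchy_trunc (u v : nat -> R) M :
  \sum_(n < M + M) cauchy_trunc u v M n ^+ 2 = energy u v M.
Proof.
rewrite /energy -sum_pair_fibers; apply: eq_bigr => n _.
rewrite expr2 big_distrl; apply: eq_bigr => p /eqP <-.
by rewrite big_distrr big_mkcond; apply: eq_bigr => q _; rewrite eq_sym.
Qed.

Lemma energy_rev (u v : nat -> R) M :
  energy u v M = energy u (fun l => v (M.-1 - l)%N) M.
Proof.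
pose sigma (x : ('I_M * 'I_M) * ('I_M * 'I_M)) :=
  ((x.1.1, rev_ord x.2.2), (x.2.1, rev_ord x.1.2)).
have sigmaK : involutive sigma by case=> [[a b] [c d]]; rewrite /sigma /= !rev_ordK.
rewrite /energy !pair_big /= [RHS](reindex_inj (inv_inj sigmaK)) /=.
apply: eq_bigr => [[[a b] [c d]]] _ /=.
have hb := ltn_ord b; have hd := ltn_ord d.
have -> : (a + (M - d.+1) == c + (M - b.+1))%N = (a + b == c + d)%N by apply/eqP/eqP; lia.
have -> : (M.-1 - (M - d.+1))%N = d by lia.
have -> : (M.-1 - (M - b.+1))%N = b by lia.
by case: eqP => _ //; ring.
Qed.

(* A discrete Parseval inequality: sum_k u_k v_k is the central coefficient of the product
   of u with the reversal of v, and reversing v does not change the energy. *)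
Lemma sqr_dot_le_sum_sqr_cauchy_trunc (u v : nat -> R) M :
  (\sum_(k < M) u k * v k) ^+ 2 <= \sum_(n < M + M) cauchy_trunc u v M n ^+ 2.
Proof.
case: M => [|M]; first by rewrite !big_ord0 expr0n.
rewrite sum_sqr_cauchy_trunc energy_rev -sum_sqr_cauchy_trunc.
have M_lt : (M < M.+1 + M.+1)%N by lia.
rewrite (bigD1 (Ordinal M_lt)) //= cauchy_trunc_small //.
have -> : cauchy u (fun l => v (M - l)%N) M = \sum_(k < M.+1) u k * v k.
  by apply: eq_bigr => k _; rewrite subKn // -ltnS.
by rewrite lerDl; apply: sumr_ge0 => n _; apply: sqr_ge0.
Qed.

Lemma ler_sqr_norm (c B : R) : `|c| <= B -> c ^+ 2 <= B ^+ 2.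
Proof. by move=> /ler_normlP[? ?]; rewrite !expr2; nra. Qed.

Lemma geometric_sum (x : R) N M : (N <= M)%N ->
  (1 - x) * \sum_(N <= n < M) x ^+ n = x ^+ N - x ^+ M.
Proof.
move=> NM; rewrite mulr_sumr (@telescope_sumr_eq _ _ _ (fun n => - x ^+ n)) //.
  by rewrite opprK addrC.
by move=> n _; rewrite exprS; ring.
Qed.

Lemma gen_sum_nat w x M : gen_sum w x M = \sum_(0 <= k < M) w k * x ^+ k.
Proof. by rewrite big_mkord. Qed.

Lemma gen_sum1 (x : R) M : (1 - x) * gen_sum (fun=> 1) x M = 1 - x ^+ M.
Proof.
rewrite gen_sum_nat; under eq_bigr do rewrite mul1r.
by rewrite geometric_sum ?expr0.
Qed.

Lemma gen_sum_ge0 w x M : 0 <= x -> (forall k, 0 <= w k) -> 0 <= gen_sum w x M.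
Proof. by move=> x0 w0; apply: sumr_ge0 => k _; rewrite mulr_ge0 ?exprn_ge0. Qed.

Lemma gen_sumZ (c : R) w x M : gen_sum (fun k => c * w k) x M = c * gen_sum w x M.
Proof. by rewrite /gen_sum mulr_sumr; apply: eq_bigr => k _; rewrite mulrA. Qed.

Lemma gen_sum_sub_le (p q : nat -> R) x M : 0 <= x ->
  2 * (gen_sum q x M - gen_sum p x M)
    <= gen_sum (fun n => (p n - q n) ^+ 2) x M + gen_sum (fun=> 1) x M.
Proof.
move=> x0; rewrite /gen_sum -sumrB mulr_sumr -big_split /=.
apply: ler_sum => n _; have := mulr_ge0 (exprn_ge0 n x0) (sqr_ge0 (p n - q n + 1)).
by rewrite !expr2; nra.
Qed.

Lemma gen_sum_le_eventually (f g : nat -> R) x N M : 0 <= x <= 1 -> (N <= M)%N ->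
  (forall n, 0 <= f n) -> (forall n, 0 <= g n) -> (forall n, (N <= n)%N -> f n <= g n) ->
  gen_sum f x M <= gen_sum g x M + \sum_(n < N) f n.
Proof.
move=> /andP[x0 x1] NM f0 g0 fg.
rewrite !gen_sum_nat -(big_mkord xpredT f) !(big_cat_nat (leq0n N) NM) /=.
have h1 : \sum_(0 <= n < N) f n * x ^+ n <= \sum_(0 <= n < N) f n.
  by apply: ler_sum => n _; rewrite ler_piMr ?exprn_ile1.
have h2 : \sum_(N <= n < M) f n * x ^+ n <= \sum_(N <= n < M) g n * x ^+ n.
  by apply: ler_sum_nat => n /andP[Nn _]; rewrite ler_wpM2r ?exprn_ge0 ?fg.
have h3 : 0 <= \sum_(0 <= n < N) g n * x ^+ n.
  by apply: sumr_ge0 => n _; rewrite mulr_ge0 ?exprn_ge0.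
lra.
Qed.

Lemma gen_sum_ge_eventually (f : nat -> R) x L N M : 0 <= x <= 1 -> (N <= M)%N ->
  (forall n, 0 <= f n) -> (forall n, (N <= n)%N -> L <= f n) ->
  L * (x ^+ N - x ^+ M) <= (1 - x) * gen_sum f x M.
Proof.
move=> /andP[x0 x1] NM f0 Lf.
rewrite -(@geometric_sum x N M NM) mulrCA ler_wpM2l ?subr_ge0 //.
rewrite gen_sum_nat (big_cat_nat (leq0n N) NM) /= mulr_sumr.
rewrite -[X in X <= _]add0r lerD //.
  by apply: sumr_ge0 => n _; rewrite mulr_ge0 ?exprn_ge0.
by apply: ler_sum_nat => n /andP[Nn _]; rewrite ler_wpM2r ?exprn_ge0 ?Lf.
Qed.

Lemma sqr_gen_sumE (w : nat -> R) x M :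
  gen_sum w x M ^+ 2 = gen_sum (cauchy w w) x M
    + \sum_(i < M) cauchy_trunc (fun k => w k * x ^+ k) (fun k => w k * x ^+ k) M (M + i).
Proof.
rewrite expr2.
apply: etrans (mul_sums_cauchy_trunc (fun k => w k * x ^+ k) (fun k => w k * x ^+ k) M) _.
rewrite big_split_ord /=; congr (_ + _).
by apply: eq_bigr => n _; rewrite cauchy_trunc_small // cauchy_weight mulrC.
Qed.

Lemma gen_sum_cauchy_le_sqr (w : nat -> R) x M : 0 <= x -> (forall k, 0 <= w k) ->
  gen_sum (cauchy w w) x M <= gen_sum w x M ^+ 2.
Proof.
move=> x0 w0; rewrite sqr_gen_sumE lerDl; apply: sumr_ge0 => i _.
by apply: cauchy_trunc_ge0 => k _; rewrite !mulr_ge0 ?exprn_ge0.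
Qed.

Lemma sqr_gen_sum_le (w : nat -> R) x M : 0 <= x <= 1 -> (forall k, 0 <= w k <= 1) ->
  gen_sum w x M ^+ 2 <= gen_sum (cauchy w w) x M + M%:R ^+ 2 * x ^+ M.
Proof.
move=> x01 w01; rewrite sqr_gen_sumE lerD2l.
have w_le1 i j : `|w i * w j| <= 1.
  have /andP[? ?] := w01 i; have /andP[? ?] := w01 j.
  by rewrite ger0_norm ?mulr_ge0 // mulr_ile1.
have -> : M%:R ^+ 2 * x ^+ M = \sum_(i < M) M%:R * (1 * x ^+ M).
  by rewrite sumr_const card_ord -mulr_natl; ring.
apply: ler_sum => i _; apply: le_trans (ler_norm _) _.
by apply: norm_cauchy_trunc_weight_le; rewrite ?leq_addr.
Qed.

(* Parseval for u_k = (a_k - b_k) r^k and v_k = (a_k + b_k) r^k: the coefficients of u * v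
   below M are r^n ((a*a)_n - (b*b)_n), the others are at most 2 M r^M. *)
Lemma sqr_gen_sum_diff_sqr_le (a b : nat -> R) r M :
  0 <= r <= 1 -> (forall k, 0 <= a k <= 1) -> (forall k, 0 <= b k <= 1) ->
  gen_sum (fun k => a k ^+ 2 - b k ^+ 2) (r ^+ 2) M ^+ 2
    <= gen_sum (fun n => (cauchy a a n - cauchy b b n) ^+ 2) (r ^+ 2) M
       + 4 * M%:R ^+ 3 * (r ^+ 2) ^+ M.
Proof.
move=> r01 a01 b01.
pose u k := (a k - b k) * r ^+ k; pose v k := (a k + b k) * r ^+ k.
have uv_le i j : `|(a i - b i) * (a j + b j)| <= 2.
  have /andP[? ?] := a01 i; have /andP[? ?] := b01 i.
  have /andP[? ?] := a01 j; have /andP[? ?] := b01 j.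
  by apply/ler_normlP; split; nra.
have -> : gen_sum (fun k => a k ^+ 2 - b k ^+ 2) (r ^+ 2) M = \sum_(k < M) u k * v k.
  by apply: eq_bigr => k _; rewrite /u /v exprAC expr2; ring.
apply: le_trans (sqr_dot_le_sum_sqr_cauchy_trunc u v M) _.
rewrite big_split_ord /=.
have -> : \sum_(n < M) cauchy_trunc u v M n ^+ 2
    = gen_sum (fun n => (cauchy a a n - cauchy b b n) ^+ 2) (r ^+ 2) M.
  apply: eq_bigr => n _.
  by rewrite cauchy_trunc_small // cauchy_weight cauchy_diff_sqr exprMn exprAC mulrC.
rewrite lerD2l.
have -> : 4 * M%:R ^+ 3 * (r ^+ 2) ^+ M = \sum_(i < M) (M%:R * (2 * r ^+ M)) ^+ 2.
  by rewrite sumr_const card_ord -mulr_natl exprAC; ring.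
apply: ler_sum => i _; apply: ler_sqr_norm.
by apply: norm_cauchy_trunc_weight_le; rewrite ?leq_addr.
Qed.

Lemma pow_mul_bernoulli_le1 (x : R) k : 0 <= x <= 1 -> x ^+ k * (1 + k%:R * (1 - x)) <= 1.
Proof.
move=> /andP[x0 x1]; elim: k => [|k IH]; first by rewrite expr0 mul0r addr0 mul1r.
have xk1 : x * x ^+ k <= 1 by rewrite -exprS exprn_ile1.
have : 0 <= (1 - x * x ^+ k) * (1 - x) by rewrite mulr_ge0 // subr_ge0.
have := ler_wpM2l x0 IH.
by rewrite exprS -natr1; nra.
Qed.

Lemma bernoulli_pow_ge (x : R) k : 0 <= x <= 1 -> 1 - k%:R * (1 - x) <= x ^+ k.
Proof.
move=> /andP[x0 x1]; elim: k => [|k IH]; first by rewrite mul0r subr0 expr0.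
rewrite exprS -natr1.
have := ler_wpM2l x0 IH; have := mulr_ge0 (ler0n R k) (sqr_ge0 (1 - x)).
by rewrite expr2; nra.
Qed.

Lemma exists_cube_pow_small (x : R) K : 0 <= x < 1 ->
  exists M, (K <= M)%N /\ 4 * M%:R ^+ 3 * x ^+ M <= 1.
Proof.
move=> /andP[x0 x1]; have y0 : 0 < 1 - x by rewrite subr_gt0.
have [t t_gt] : exists t : nat, 256 / (1 - x) ^+ 4 < t%:R.
  by exists (Num.truncn (256 / (1 - x) ^+ 4)).+1; apply: truncnS_gt.
pose k := (K + t).+1.
exists (4 * k)%N; split; first lia.
(* x^k k (1 - x) <= 1, hence 4 (4k)^3 x^(4k) <= 256 / (k (1 - x)^4) <= 1. *)
have k_big : 256 <= k%:R * (1 - x) ^+ 4.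
  rewrite -ler_pdivrMr ?exprn_gt0 //; apply/ltW/(lt_le_trans t_gt).
  by rewrite ler_nat /k; lia.
have t_le1 : (x ^+ k * (k%:R * (1 - x))) ^+ 4 <= 1.
  have := pow_mul_bernoulli_le1 x k (introT andP (conj x0 (ltW x1))).
  have := exprn_ge0 k x0 => xk0 hb.
  by rewrite exprn_ile1 // ?mulr_ge0 ?ler0n ?(ltW y0) //; nra.
have := ler_wpM2r (mulr_ge0 (exprn_ge0 3 (ler0n R k)) (exprn_ge0 4 (exprn_ge0 k x0))) k_big.
by rewrite natrM mulnC exprM; rewrite !exprMn in t_le1; lra.
Qed.

Lemma exists_radius_near1 (d H : R) N : 0 < d <= 1 -> 0 <= H ->
  exists2 x, 0 <= x < 1 & 3 / 4 <= x ^+ N /\ H * (1 - x) < 2 * d.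
Proof.
move=> /andP[d0 d1] H0; have N0 := ler0n R N.
have [delta delta0 delta_den] : exists2 delta, 0 < delta & delta * (4 * N%:R + H + 1) = d.
  have den0 : 0 < 4 * N%:R + H + 1 by lra.
  by exists (d / (4 * N%:R + H + 1)); rewrite ?divr_gt0 ?divfK ?gt_eqF.
have x01 : 0 <= 1 - delta <= 1 by apply/andP; split; nra.
exists (1 - delta); first by apply/andP; split; nra.
split; last by have := mulr_ge0 N0 (ltW delta0); nra.
have Ndelta : 4 * (N%:R * delta) <= 1.
  by have := mulr_ge0 (addr_ge0 H0 ler01) (ltW delta0); nra.
by have := bernoulli_pow_ge _ N x01; lra.
Qed.

(* If F >= (1 - d/2) G then F - B2 >= d G / 4, which is too large for the first estimate;
   otherwise F^2 <= (1 - d/2)^2 G^2 is too small for RA >= (1 - d/4 - d^2/128) CV - K0/2. *)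
Lemma estimates_inconsistent {d F G B2 RA CV E2 Z T K0 n1 : R} :
  0 < d -> d <= 1 -> 0 <= F -> 0 <= G -> 0 <= T -> T <= 1 -> 0 <= K0 -> 0 <= n1 ->
  (F - B2) ^+ 2 <= E2 + T -> 2 * (CV - RA) <= E2 + Z -> RA <= F ^+ 2 -> CV <= G ^+ 2 ->
  G ^+ 2 <= CV + T -> E2 <= (d / 8) ^+ 2 * CV + K0 -> B2 <= (1 - d) * G + n1 ->
  Z <= d / 2 * CV -> 16 * n1 ^+ 2 + 64 * (K0 + 2) < d ^+ 2 * CV -> False.
Proof.
move=> d0 d1 F0 G0 T0 T1 K00 n10 hA hB hC1 hC2 hC3 hD hE hZ hH.
have CV0 : 0 <= CV by nra.
case: (leP ((1 - d / 2) * G) F) => hF.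
- have hg : d ^+ 2 * CV <= (d * G) ^+ 2.
    by rewrite exprMn; apply: ler_wpM2l => //; apply: exprn_ge0; lra.
  have dG0 : 0 <= d * G by apply: mulr_ge0; lra.
  have h4 : 4 * n1 <= d * G.
    rewrite leNgt; apply/negP => hlt.
    have : (d * G) ^+ 2 <= (4 * n1) ^+ 2 by rewrite !expr2; nra.
    by rewrite !expr2 in hH hg * => h; nra.
  have hFB2 : (d * G) ^+ 2 / 16 <= (F - B2) ^+ 2.
    have : 0 <= d * G / 4 by apply: mulr_ge0 => //; lra.
    by rewrite !expr2; nra.
  have : (d / 8) ^+ 2 * CV <= (d / 8) ^+ 2 * (G ^+ 2 + T).
    by apply: ler_wpM2l; [apply: exprn_ge0; lra | lra].
  by rewrite !expr2 in hH hg hFB2 * => h; nra.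
- have hF2 : F ^+ 2 <= (1 - d / 2) ^+ 2 * (CV + 1).
    apply: le_trans (_ : (1 - d / 2) ^+ 2 * G ^+ 2 <= _).
      by rewrite -exprMn !expr2; nra.
    by apply: ler_wpM2l; [apply: exprn_ge0; lra | lra].
  by rewrite !expr2 in hH hF2 hD hA hC1 *; nra.
Qed.

Lemma small_radius_bounds {d x y H CV Z : R} : 0 < d -> x <= 1 -> 1 / 2 <= y ->
  4 / d * y <= (1 - x) * CV -> (1 - x) * Z <= 1 -> H * (1 - x) < 2 * d ->
  Z <= d / 2 * CV /\ H < d ^+ 2 * CV.
Proof.
move=> d0 x1 y_ge hCV hZ hH.
have hCV' : 2 <= d * ((1 - x) * CV).
  have := ler_wpM2l (ltW d0) hCV; rewrite mulrA mulrCA divff ?gt_eqF //; lra.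
have s0 : 0 < 1 - x.
  rewrite lt_neqAle subr_ge0 x1 andbT; apply/eqP => s0.
  by move: hCV'; rewrite -s0 mul0r mulr0; lra.
split.
- by rewrite -(ler_pM2l s0); nra.
- by rewrite -(ltr_pM2l s0); nra.
Qed.

Section NoApproximation.

Variables (b : nat -> R) (A : nat -> bool) (c : R) (N0 N1 N : nat).

Let a := indicator A.
Let d := 1 - c.
Let err n := cauchy a a n - cauchy b b n.
Let K0 := \sum_(n < N0) err n ^+ 2.
Let H := 16 * N1%:R ^+ 2 + 64 * (K0 + 2).

Hypothesis b01 : forall k, 0 <= b k <= 1.
Hypothesis c_lt1 : c < 1.
Hypothesis b_le_c : forall k, (N1 <= k)%N -> b k <= c.
Hypothesis err_small : forall n, (N0 <= n)%N -> err n ^+ 2 <= (d / 8) ^+ 2 * cauchy b b n.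
Hypothesis cauchy_large : forall n, (N <= n)%N -> 4 / d <= cauchy b b n.

Let b_ge0 k : 0 <= b k. Proof. by case/andP: (b01 k). Qed.
Let c_ge0 : 0 <= c. Proof. by have := b_ge0 N1; have := b_le_c _ (leqnn N1); lra. Qed.
Let d_gt0 : 0 < d. Proof. by rewrite subr_gt0. Qed.
Let d_le1 : d <= 1. Proof. by rewrite lerBlDr lerDl. Qed.
Let K0_ge0 : 0 <= K0. Proof. by apply: sumr_ge0 => n _; apply: sqr_ge0. Qed.
Let H_ge0 : 0 <= H. Proof. by rewrite addr_ge0 ?mulr_ge0 ?exprn_ge0 ?addr_ge0. Qed.

Lemma sqr_gen_sum_sub_le x M : 0 <= x <= 1 ->
  (gen_sum a x M - gen_sum (fun k => b k ^+ 2) x M) ^+ 2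
    <= gen_sum (fun n => err n ^+ 2) x M + 4 * M%:R ^+ 3 * x ^+ M.
Proof.
move=> /andP[x0 x1].
have -> : gen_sum a x M - gen_sum (fun k => b k ^+ 2) x M
    = gen_sum (fun k => a k ^+ 2 - b k ^+ 2) x M.
  by rewrite /gen_sum -sumrB; apply: eq_bigr => k _; rewrite /a indicator_sqr mulrBl.
have r01 : 0 <= Num.sqrt x <= 1 by rewrite sqrtr_ge0 -sqrtr1 ler_sqrt.
have := sqr_gen_sum_diff_sqr_le a b (Num.sqrt x) M r01 (indicator01 A) b01.
by rewrite sqr_sqrtr.
Qed.

Lemma gen_sum_err_le x M : 0 <= x <= 1 -> (N0 <= M)%N ->
  gen_sum (fun n => err n ^+ 2) x M <= (d / 8) ^+ 2 * gen_sum (cauchy b b) x M + K0.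
Proof.
move=> x01 N0M; rewrite -gen_sumZ.
apply: (gen_sum_le_eventually _ _ x N0 M x01 N0M _ _ err_small) => n.
  exact: sqr_ge0.
by rewrite mulr_ge0 ?sqr_ge0 ?cauchy_ge0.
Qed.

Lemma gen_sum_sqr_le x M : 0 <= x <= 1 -> (N1 <= M)%N ->
  gen_sum (fun k => b k ^+ 2) x M <= (1 - d) * gen_sum b x M + N1%:R.
Proof.
move=> x01 N1M; have -> : 1 - d = c by rewrite /d; ring.
rewrite -gen_sumZ; apply: le_trans (gen_sum_le_eventually (fun k => b k ^+ 2)
  (fun k => c * b k) x N1 M x01 N1M _ _ _) _.
- by move=> k; apply: sqr_ge0.
- by move=> k; apply: mulr_ge0.
- by move=> k /b_le_c bc; rewrite expr2; apply: ler_wpM2r.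
rewrite lerD2l -[N1 in N1%:R]card_ord -sumr_const; apply: ler_sum => k _.
by rewrite expr2 mulr_ile1 //; case/andP: (b01 k).
Qed.

Lemma gen_sum_estimates_absurd x M : 0 <= x <= 1 ->
  (N0 <= M)%N -> (N1 <= M)%N -> (N <= M)%N -> (0 < M)%N ->
  3 / 4 <= x ^+ N -> 4 * M%:R ^+ 3 * x ^+ M <= 1 -> H * (1 - x) < 2 * d -> False.
Proof.
move=> x01 N0M N1M NM M_gt0 xN T_le1 x_close; have /andP[x0 x1] := x01.
have a01 := indicator01 A.
have hB := gen_sum_sub_le (cauchy a a) (cauchy b b) x M x0.
have hC1 := gen_sum_cauchy_le_sqr a x M x0 (fun k => proj1 (andP (a01 k))).
have hC2 := gen_sum_cauchy_le_sqr b x M x0 b_ge0.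
have hC3 : gen_sum b x M ^+ 2 <= gen_sum (cauchy b b) x M + 4 * M%:R ^+ 3 * x ^+ M.
  apply: le_trans (sqr_gen_sum_le b x M x01 b01) _; rewrite lerD2l ler_wpM2r ?exprn_ge0 //.
  have : M%:R ^+ 2 <= M%:R ^+ 3 :> R by apply: ler_weXn2l; rewrite ?ler1n.
  by nra.
have hF := gen_sum_ge_eventually (cauchy b b) x _ N M x01 NM
  (fun n => cauchy_ge0 b b n b_ge0 b_ge0) cauchy_large.
have xNM : 1 / 2 <= x ^+ N - x ^+ M.
  have : 1 <= M%:R ^+ 3 :> R by rewrite exprn_ege1 // ler1n.
  by have := exprn_ge0 M x0; nra.
have hZ1 : (1 - x) * gen_sum (fun=> 1) x M <= 1.
  by rewrite gen_sum1; have := exprn_ge0 M x0; lra.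
have [hZ hH] := small_radius_bounds d_gt0 x1 xNM hF hZ1 x_close.
apply: (estimates_inconsistent d_gt0 d_le1 _ _ _ T_le1 K0_ge0 _
  (sqr_gen_sum_sub_le x M x01) hB hC1 hC2 hC3 (gen_sum_err_le x M x01 N0M)
  (gen_sum_sqr_le x M x01 N1M) hZ hH).
- by apply: gen_sum_ge0 => // k; case/andP: (a01 k).
- exact: gen_sum_ge0.
- by rewrite !mulr_ge0 ?exprn_ge0.
- exact: ler0n.
Qed.

Lemma sqrt_approximation_absurd : False.
Proof.
have [x /andP[x0 x_lt1] [xN x_close]] :=
  exists_radius_near1 d H N (introT andP (conj d_gt0 d_le1)) H_ge0.
have [M [M_big T_le1]] :=
  exists_cube_pow_small x (N0 + N1 + N).+1 (introT andP (conj x0 x_lt1)).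
have [N0M N1M NM M_gt0] : [/\ N0 <= M, N1 <= M, N <= M & 0 < M]%N.
  by clear -M_big; split; lia.
have x01 : 0 <= x <= 1 by rewrite x0 ltW.
exact: (gen_sum_estimates_absurd x M x01 N0M N1M NM M_gt0 xN T_le1 x_close).
Qed.

End NoApproximation.

Lemma no_sqrt_approximation (b : nat -> R) (A : nat -> bool) (c : R) (N1 : nat) :
  (forall k, 0 <= b k <= 1) -> c < 1 -> (forall k, (N1 <= k)%N -> b k <= c) ->
  (forall L, exists N, forall n, (N <= n)%N -> L <= cauchy b b n) ->
  ~ (forall eps, 0 < eps -> exists N0, forall n, (N0 <= n)%N ->
       (cauchy (indicator A) (indicator A) n - cauchy b b n) ^+ 2
         <= eps ^+ 2 * cauchy b b n).
Proof.
move=> b01 c_lt1 b_le_c large approx.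
have eps_gt0 : 0 < (1 - c) / 8 by rewrite divr_gt0 // subr_gt0.
have [N0 err_small] := approx _ eps_gt0.
have [N cauchy_large] := large (4 / (1 - c)).
exact: (sqrt_approximation_absurd b A c N0 N1 N b01 c_lt1 b_le_c err_small cauchy_large).
Qed.

Lemma sqr_le_of_Rabs_le_sqrt (z y eps : R) : Rle 0 y ->
  Rle (Rabs z) (eps * Rabs (sqrt y)) -> z ^+ 2 <= eps ^+ 2 * y.
Proof.
move=> y0; have sqrt_y : sqrt y ^+ 2 = y by rewrite expr2; exact: sqrt_sqrt.
by rewrite (Rabs_pos_eq _ (sqrt_pos y)) => /RleP /ler_sqr_norm; rewrite exprMn sqrt_y.
Qed.

Local Close Scope ring_scope.

Theorem theorem9 (b : nat -> R) :
  (forall n : nat, 0 <= b n <= 1) ->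
  limsup_lt_1 b ->
  tends_to_infty (conv b) ->
  ~ exists A : nat -> bool,
      little_o_approx (fun n => INR (R_A A n)) (conv b) (fun n => sqrt (conv b n)).
Proof.
move=> b01 [c [c_lt1 [N1 b_le_c]]] conv_infty [A approx].
apply: (@no_sqrt_approximation b A c N1).
- by move=> k; have [/RleP b0 /RleP b1] := b01 k; apply/andP.
- exact/RltP.
- by move=> k /ssrnat.leP /b_le_c /RleP.
- move=> L; have [N conv_ge] := conv_infty L.
  by exists N => n /ssrnat.leP /conv_ge /RleP; rewrite conv_cauchy.
- move=> eps /RltP /approx [N0 approx_N0]; exists N0 => n /ssrnat.leP /approx_N0.
  rewrite R_A_cauchy conv_cauchy; apply: sqr_le_of_Rabs_le_sqrt.
  by apply/RleP; apply: cauchy_ge0 => k; case: (b01 k) => /RleP.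
Qed.
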